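(* If two NFAs $\mathcal{A}_1$ and $\mathcal{A}_2$ over a finite alphabet $A$ both admit a $(\vec u,\vec B)$-path for the same factorization pattern $(\vec u,\vec B)$, then $L(\mathcal{A}_1)$ and $L(\mathcal{A}_2)$ are not PT-separable.
   Context: Piecewise testable (PT) languages over $A$ are finite Boolean combinations of languages $A^*a_1A^*\cdots A^*a_nA^*$ ($a_i\in A$); $L_1,L_2$ are PT-separable if some PT language $L$ satisfies $L_1\subseteq L$ and $L\cap L_2=\varnothing$. For states $p,q$ and $B\subseteq A$: $p\xrightarrow{\subseteq B}q$ denotes a path (possibly empty) from $p$ to $q$ with all transition labels in $B$; $p\xrightarrow{=B}q$ denotes such a path in which every letter of $B$ occurs. A factorization pattern is $(\vec u,\vec B)$ with $\vec u=(u_0,\dots,u_p)\in (A^* )^{p+1}$ and $\vec B=(B_1,\dots,B_p)$ nonempty subsets of $A$. A $(\vec u,\vec B)$-path is a path from an initial to a final state of the form $s_0\xrightarrow{u_0}p_1\xrightarrow{\subseteq B_1}q_1\xrightarrow{=B_1}q_1\xrightarrow{\subseteq B_1}r_1\xrightarrow{u_1}\cdots\xrightarrow{u_{p-1}}p_p\xrightarrow{\subseteq B_p}q_p\xrightarrow{=B_p}q_p\xrightarrow{\subseteq B_p}r_p\xrightarrow{u_p}f$. *)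

From mathcomp Require Import all_boot.
Set Implicit Arguments. Unset Strict Implicit. Unset Printing Implicit Defensive.

Record nfa (A : finType) := NFA {
  state : finType;
  init : {set state};
  final : {set state};
  trans : state -> A -> state -> bool
}.

Section NFA.
Variables (A : finType) (N : nfa A).

Fixpoint run (p : state N) (w : seq A) (q : state N) : bool :=
  match w with
  | [::] => p == q
  | a :: w' => [exists r, trans p a r && run r w' q]
  end.

Definition sub_path (p : state N) (B : {set A}) (q : state N) : Prop :=
  exists w : seq A, all (fun a => a \in B) w /\ run p w q.

Definition eq_path (p : state N) (B : {set A}) (q : state N) : Prop :=
  exists w : seq A, [/\ all (fun a => a \in B) w,
                        all (fun a => a \in w) (enum B) & run p w q].

(* Remaining part of a (u,B)-path from state x = p_i, where steps lists
   (B_i, u_i), ..., (B_p, u_p). *)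
Fixpoint pattern_tail (x : state N) (steps : seq ({set A} * seq A)) : Prop :=
  match steps with
  | [::] => x \in final N
  | (B, u) :: steps' =>
      exists (q r t : state N),
        [/\ sub_path x B q, eq_path q B q, sub_path q B r, run r u t
          & pattern_tail t steps']
  end.

(* A (u,B)-path for the pattern u = (u0, u1, ..., up), B = (B1, ..., Bp),
   encoded as u0 and steps = [:: (B1,u1); ...; (Bp,up)]. *)
Definition pattern_path (u0 : seq A) (steps : seq ({set A} * seq A)) : Prop :=
  exists s0 p1 : state N, [/\ s0 \in init N, run s0 u0 p1 & pattern_tail p1 steps].

Definition lang (w : seq A) : Prop :=
  exists s f : state N, [/\ s \in init N, f \in final N & run s w f].

End NFA.

Definition valid_pattern (A : finType) (steps : seq ({set A} * seq A)) : Prop :=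
  all (fun st => st.1 != set0) steps.

(* Boolean combinations of languages A^* a1 A^* ... A^* an A^* *)
Inductive pt_expr (A : finType) :=
| PTatom of seq A
| PTnot of pt_expr A
| PTand of pt_expr A & pt_expr A
| PTor of pt_expr A & pt_expr A.

Fixpoint pt_eval (A : finType) (e : pt_expr A) (w : seq A) : bool :=
  match e with
  | PTatom s => subseq s w
  | PTnot e1 => ~~ pt_eval e1 w
  | PTand e1 e2 => pt_eval e1 w && pt_eval e2 w
  | PTor e1 e2 => pt_eval e1 w || pt_eval e2 w
  end.

Definition PT_separable (A : finType) (L1 L2 : seq A -> Prop) : Prop :=
  exists e : pt_expr A,
    (forall w, L1 w -> pt_eval e w) /\ (forall w, L2 w -> ~~ pt_eval e w).

From Pilot Require Import Defs.
From mathcomp Require Import all_boot.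
Set Implicit Arguments. Unset Strict Implicit. Unset Printing Implicit Defensive.

(* The proof is Simon's argument with the congruence ~n ("same subwords of
   length <= n").  A PT expression e only tests subwords of length at most
   its depth, so it cannot distinguish ~n-equivalent words once depth e <= n;
   hence it suffices to exhibit ~n-equivalent accepted words w1, w2 for
   N1, N2 with n := depth e.
   - ~n is a congruence for concatenation (subwords of a product split).
   - If x, z, y are B-words and z contains every letter of B, then the
     subwords of length <= n of x z^n y are exactly the B-words of length
     <= n; so two such "blocks" built for the same B are ~n-equivalent.
   - Along the two (u,B)-paths, pumping each =B loop n times yields accepted
     words of the shape u0 (x1 z1^n y1) u1 ... (xp zp^n yp) up in both
     automata, which are ~n-equivalent factor by factor. *)

Section Subwords.
Variable T : eqType.

Lemma subseq_catP (s a b : seq T) :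
  subseq s (a ++ b) -> exists s1 s2, [/\ s = s1 ++ s2, subseq s1 a & subseq s2 b].
Proof.
elim: a s => [|x a IHa] s /=; first by exists [::], s.
case: s => [|y s] /=; first by exists [::], [::]; rewrite !sub0seq.
case: eqP => [<-|_] /IHa [s1 [s2 [-> sub1 sub2]]].
  by exists (y :: s1), s2; rewrite /= eqxx.
by exists s1, s2; split=> //; apply: subseq_trans sub1 (subseq_cons a x).
Qed.

Definition simon (n : nat) (w w' : seq T) : Prop :=
  forall s, size s <= n -> subseq s w = subseq s w'.

Lemma simon_refl n w : simon n w w.
Proof. by []. Qed.

Lemma simon_cat n a a' b b' :
  simon n a a' -> simon n b b' -> simon n (a ++ b) (a' ++ b').
Proof.
have half c c' d d' : simon n c c' -> simon n d d' ->
    forall s, size s <= n -> subseq s (c ++ d) -> subseq s (c' ++ d').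
  move=> simc simd s sz /subseq_catP [s1 [s2 [Es sub1 sub2]]].
  move: sz; rewrite Es size_cat => sz.
  have sz1 : size s1 <= n by apply: leq_trans sz; apply: leq_addr.
  have sz2 : size s2 <= n by apply: leq_trans sz; apply: leq_addl.
  by apply: cat_subseq; [rewrite -simc | rewrite -simd].
move=> sima simb s sz; apply/idP/idP; first exact: half.
by apply: half => // t st; [rewrite sima | rewrite simb].
Qed.

Definition wpow (z : seq T) (k : nat) : seq T := flatten (nseq k z).

Lemma subseq_wpow (P : pred T) (z s : seq T) k :
  {subset P <= z} -> all P s -> size s <= k -> subseq s (wpow z k).
Proof.
move=> Pz; elim: s k => [|a s IHs] k; first by rewrite sub0seq.
case: k => [|k] //= /andP [Pa Ps] sz.
by rewrite -cat1s cat_subseq ?IHs // sub1seq Pz.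
Qed.

Lemma subseq_block (P : pred T) n x z y s :
  all P x -> all P z -> all P y -> {subset P <= z} -> size s <= n ->
  subseq s (x ++ wpow z n ++ y) = all P s.
Proof.
move=> Px Pz Py Pinz sz; apply/idP/idP.
  move=> /mem_subseq sub; apply/allP => a /sub.
  rewrite !mem_cat => /or3P [ax|/flattenP [t /nseqP [-> _] az]|ay].
  - exact: (allP Px).
  - exact: (allP Pz).
  - exact: (allP Py).
move=> Ps; apply: subseq_trans (subseq_wpow Pinz Ps sz) _.
by rewrite catA; apply: subseq_trans (suffix_subseq x _) (prefix_subseq _ y).
Qed.

Lemma simon_block (P : pred T) n x z y x' z' y' :
  all P x -> all P z -> all P y -> {subset P <= z} ->
  all P x' -> all P z' -> all P y' -> {subset P <= z'} ->
  simon n (x ++ wpow z n ++ y) (x' ++ wpow z' n ++ y').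
Proof.
by move=> Px Pz Py Pinz Px' Pz' Py' Pinz' s sz; rewrite !(subseq_block (P := P)).
Qed.

End Subwords.

Fixpoint pt_depth (A : finType) (e : pt_expr A) : nat :=
  match e with
  | PTatom s => size s
  | PTnot e1 => pt_depth e1
  | PTand e1 e2 | PTor e1 e2 => maxn (pt_depth e1) (pt_depth e2)
  end.

Lemma pt_eval_simon (A : finType) n (w w' : seq A) (e : pt_expr A) :
  simon n w w' -> pt_depth e <= n -> pt_eval e w = pt_eval e w'.
Proof.
move=> sim; elim: e => [s|e1 IH1|e1 IH1 e2 IH2|e1 IH1 e2 IH2] /=.
- exact: sim.
- by move=> /IH1 ->.
- by rewrite geq_max => /andP [/IH1 -> /IH2 ->].
- by rewrite geq_max => /andP [/IH1 -> /IH2 ->].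
Qed.

Section Blocks.
Variable A : finType.

Definition block_word (B : {set A}) (n : nat) (w : seq A) : Prop :=
  exists x z y, [/\ w = x ++ wpow z n ++ y, all [in B] x, all [in B] z,
                    all [in B] y & {subset B <= z}].

Lemma block_word_simon (B : {set A}) n (w w' : seq A) :
  block_word B n w -> block_word B n w' -> simon n w w'.
Proof.
move=> [x [z [y [-> Bx Bz By Binz]]]] [x' [z' [y' [-> Bx' Bz' By' Binz']]]].
exact: (simon_block (P := [in B])).
Qed.

End Blocks.

Section Runs.
Variables (A : finType) (N : nfa A).

Lemma run_cat (p r q : state N) w w' :
  run p w r -> run r w' q -> run p (w ++ w') q.
Proof.
elim: w p => [|a w IHw] p /=; first by move/eqP ->.
case/existsP => t /andP [pat rt] rq; apply/existsP; exists t.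
by rewrite pat (IHw _ rt rq).
Qed.

Lemma run_wpow (q : state N) z k : run q z q -> run q (wpow z k) q.
Proof.
move=> loop; elim: k => [|k IHk]; first exact: eqxx.
exact: run_cat loop IHk.
Qed.

Definition accepts_from (x : state N) (w : seq A) : Prop :=
  exists2 f, f \in final N & run x w f.

(* The part  x -(<=B)-> q -(=B)-> q -(<=B)-> r  of a pattern path, with the
   =B loop pumped n times, reads a block word for B.  (sub_path and eq_path
   are qualified because path.v has lemmas of the same names.) *)
Lemma pumped_block (B : {set A}) n (x q r : state N) :
  Defs.sub_path x B q -> Defs.eq_path q B q -> Defs.sub_path q B r ->
  exists2 w, block_word B n w & run x w r.
Proof.
move=> [a [Ba run_a]] [z [Bz /allP zB run_z]] [y [By run_y]].
exists (a ++ wpow z n ++ y); last exact: run_cat run_a (run_cat (run_wpow n run_z) run_y).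
by exists a, z, y; split=> // b Bb; apply: zB; rewrite mem_enum.
Qed.

End Runs.

Lemma pattern_tail_simon (A : finType) (N1 N2 : nfa A) n steps
    (x1 : state N1) (x2 : state N2) :
  pattern_tail x1 steps -> pattern_tail x2 steps ->
  exists w1 w2, [/\ accepts_from x1 w1, accepts_from x2 w2 & simon n w1 w2].
Proof.
elim: steps x1 x2 => [|[B u] steps IHsteps] x1 x2 /=.
  move=> fin1 fin2; exists [::], [::].
  by split; [exists x1 | exists x2 | ]; rewrite //= eqxx.
move=> [q1 [r1 [t1 [into1 loop1 out1 run_u1 tail1]]]].
move=> [q2 [r2 [t2 [into2 loop2 out2 run_u2 tail2]]]].
have [b1 block1 run_b1] := pumped_block n into1 loop1 out1.
have [b2 block2 run_b2] := pumped_block n into2 loop2 out2.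
have [w1 [w2 [[f1 fin1 run_w1] [f2 fin2 run_w2] sim_w]]] := IHsteps _ _ tail1 tail2.
exists (b1 ++ u ++ w1), (b2 ++ u ++ w2); split.
- by exists f1; last exact: run_cat run_b1 (run_cat run_u1 run_w1).
- by exists f2; last exact: run_cat run_b2 (run_cat run_u2 run_w2).
- exact: simon_cat (block_word_simon block1 block2) (simon_cat (@simon_refl _ n u) sim_w).
Qed.

(* Given any PT expression e, the two pattern paths yield an accepted word of
   each automaton, and the two are ~(depth e)-equivalent, so e cannot accept
   the first and reject the second. *)
Theorem lemma2 (A : finType) (N1 N2 : nfa A)
    (u0 : seq A) (steps : seq ({set A} * seq A)) :
  valid_pattern steps ->
  pattern_path N1 u0 steps ->
  pattern_path N2 u0 steps ->
  ~ PT_separable (lang N1) (lang N2).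
Proof.
move=> _ [s1 [p1 [init1 run1 tail1]]] [s2 [p2 [init2 run2 tail2]]] [e [sep1 sep2]].
have [w1 [w2 [[f1 fin1 run_w1] [f2 fin2 run_w2] sim_w]]] :=
  pattern_tail_simon (pt_depth e) tail1 tail2.
have acc1 : lang N1 (u0 ++ w1) by exists s1, f1; split=> //; exact: run_cat run1 run_w1.
have acc2 : lang N2 (u0 ++ w2) by exists s2, f2; split=> //; exact: run_cat run2 run_w2.
have sim : simon (pt_depth e) (u0 ++ w1) (u0 ++ w2) :=
  simon_cat (@simon_refl _ _ u0) sim_w.
by move: (sep2 _ acc2); rewrite -(pt_eval_simon sim (leqnn _)) sep1.
Qed.
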